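(* Let $\Phi$ be either the squared hinge loss $\Phi(u)=\max(1-u,0)^2$ or the modified Huber loss ($\Phi(u)=0$ for $u\ge1$, $\Phi(u)=-4u$ for $u\le-1$, $\Phi(u)=(1-u)^2$ otherwise). Then there do not exist a convex set $\bar{\mathcal{D}}\subseteq\mathbb{R}$ with $[0,1]\subseteq\bar{\mathcal{D}}$, a strictly convex differentiable $\bar h:\bar{\mathcal{D}}\to\mathbb{R}$ and a continuous bijection $\bar t:\bar{\mathcal{D}}\to\mathbb{R}$ such that $$q\Phi(v)+(1-q)\Phi(-v)-\inf_{v'\in\mathbb{R}}\big(q\Phi(v')+(1-q)\Phi(-v')\big)=D_{\bar h}(q,\bar t^{-1}(v))\quad\text{for all } v\in\mathbb{R},\,q\in[0,1].$$
   Context: $D_{\bar h}(a,b)=\bar h(a)-\bar h(b)-\bar h'(b)(a-b)$ denotes the Bregman divergence of $\bar h$. *)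

From Stdlib Require Import Reals Lra.
Open Scope R_scope.

Definition sq_hinge (u : R) : R := Rsqr (Rmax (1 - u) 0).

Definition mod_huber (u : R) : R :=
  if Rle_dec 1 u then 0
  else if Rle_dec u (-1) then -4 * u
  else Rsqr (1 - u).

Definition cond_risk (Phi : R -> R) (q v : R) : R :=
  q * Phi v + (1 - q) * Phi (- v).

Definition is_glb (E : R -> Prop) (m : R) : Prop :=
  (forall x, E x -> m <= x) /\ (forall b, (forall x, E x -> b <= x) -> b <= m).

Definition convex_set (D : R -> Prop) : Prop :=
  forall x y s, D x -> D y -> 0 <= s <= 1 -> D (s * x + (1 - s) * y).

Definition strictly_convex_on (D : R -> Prop) (h : R -> R) : Prop :=
  forall x y s, D x -> D y -> x <> y -> 0 < s < 1 ->
    h (s * x + (1 - s) * y) < s * h x + (1 - s) * h y.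

Definition deriv_within (D : R -> Prop) (f : R -> R) (x l : R) : Prop :=
  forall eps, 0 < eps -> exists delta, 0 < delta /\
    forall y, D y -> y <> x -> Rabs (y - x) < delta ->
      Rabs ((f y - f x) / (y - x) - l) < eps.

Definition continuous_within (D : R -> Prop) (f : R -> R) (x : R) : Prop :=
  forall eps, 0 < eps -> exists delta, 0 < delta /\
    forall y, D y -> Rabs (y - x) < delta -> Rabs (f y - f x) < eps.

Definition bregman (h h' : R -> R) (a b : R) : R :=
  h a - h b - h' b * (a - b).

(* Both losses are nonnegative and vanish on the whole ray [1, +oo).
   At the label probability q = 1 the conditional risk is just Phi(v), so its
   infimum is 0 and the representation would give Phi(v) = D_h(1, t^-1(v)).
   For a strictly convex differentiable h the Bregman divergence D_h(a, b) is
   positive whenever a <> b, hence every zero v of Phi must satisfy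
   t^-1(v) = 1.  Since Phi vanishes at the two distinct points 1 and 2, the
   map t would send the single point 1 to both 1 and 2: contradiction. *)

From Stdlib Require Import Reals Lra.
Open Scope R_scope.

Section BregmanPositivity.

Variables (D : R -> Prop) (h : R -> R).
Hypothesis D_convex : convex_set D.

Lemma increment_lower_bound (l b y eps : R) :
  deriv_within D h b l -> D b -> D y -> y <> b -> 0 < eps ->
  exists s, 0 < s < 1 /\
    s * (l * (y - b) - eps * Rabs (y - b)) <= h (s * y + (1 - s) * b) - h b.
Proof.
  intros Hder Db Dy Hyb Heps.
  set (d := Rabs (y - b)).
  assert (Hd : 0 < d) by (apply Rabs_pos_lt; lra).
  destruct (Hder eps Heps) as [delta [Hdelta Hquot]].
  set (s := Rmin (1/2) (delta / (2 * d))).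
  assert (Hs_half : s <= 1/2) by apply Rmin_l.
  assert (Hs_pos : 0 < s).
  { apply Rmin_pos; [lra | apply Rdiv_lt_0_compat; lra]. }
  assert (Hsd : s * d < delta).
  { assert (s * d <= delta / (2 * d) * d) by (apply Rmult_le_compat_r; [lra | apply Rmin_r]).
    assert (delta / (2 * d) * d = delta / 2) by (field; lra).
    lra. }
  exists s; split; [lra |].
  set (z := s * y + (1 - s) * b).
  assert (Hzb : z - b = s * (y - b)) by (unfold z; ring).
  assert (Hz_ne : z <> b).
  { intro E. assert (Hprod : s * (y - b) = 0) by lra.
    destruct (Rmult_integral _ _ Hprod); lra. }
  assert (Hz_close : Rabs (z - b) < delta).
  { rewrite Hzb, Rabs_mult, (Rabs_pos_eq s) by lra. exact Hsd. }
  assert (Dz : D z) by (apply D_convex; auto; lra).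
  set (Q := (h z - h b) / (z - b) - l).
  assert (HQ : Rabs Q < eps) by exact (Hquot z Dz Hz_ne Hz_close).
  assert (Hincr : h z - h b = s * (l * (y - b) + Q * (y - b))).
  { unfold Q. rewrite Hzb. field. split; lra. }
  assert (HQ_dir : - (eps * d) <= Q * (y - b)).
  { assert (Rabs (Q * (y - b)) <= eps * d).
    { rewrite Rabs_mult. apply Rmult_le_compat_r; [apply Rabs_pos | lra]. }
    assert (- (Q * (y - b)) <= Rabs (Q * (y - b))) by (rewrite <- Rabs_Ropp; apply Rle_abs).
    lra. }
  rewrite Hincr. apply Rmult_le_compat_l; lra.
Qed.

Hypothesis h_strict : strictly_convex_on D h.

Lemma supporting_line (h'b b y : R) :
  deriv_within D h b h'b -> D b -> D y -> h'b * (y - b) <= h y - h b.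
Proof.
  intros Hder Db Dy.
  destruct (Req_dec y b) as [-> | Hyb]; [lra |].
  assert (Hd : 0 < Rabs (y - b)) by (apply Rabs_pos_lt; lra).
  apply le_epsilon; intros eps Heps.
  assert (Htol : 0 < eps / Rabs (y - b)) by (apply Rdiv_lt_0_compat; lra).
  destruct (increment_lower_bound h'b b y _ Hder Db Dy Hyb Htol)
    as [s [Hs Hlow]].
  assert (Hchord : h (s * y + (1 - s) * b) < s * h y + (1 - s) * h b)
    by (apply h_strict; auto).
  assert (Htol_eq : eps / Rabs (y - b) * Rabs (y - b) = eps) by (field; lra).
  assert (Hscaled : s * (h'b * (y - b) - eps) < s * (h y - h b))
    by (rewrite Htol_eq in Hlow; lra).
  apply Rmult_lt_reg_l in Hscaled; lra.
Qed.

Lemma bregman_pos (h' : R -> R) (a b : R) :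
  deriv_within D h b (h' b) -> D a -> D b -> a <> b -> 0 < bregman h h' a b.
Proof.
  intros Hder Da Db Hab. unfold bregman.
  set (c := (1/2) * a + (1 - 1/2) * b).
  assert (Dc : D c) by (apply D_convex; auto; lra).
  assert (Htangent := supporting_line (h' b) b c Hder Db Dc).
  assert (Hmid : h c < (1/2) * h a + (1 - 1/2) * h b) by (apply h_strict; auto; lra).
  assert (Hcb : c - b = (a - b) / 2) by (unfold c; field).
  rewrite Hcb in Htangent. lra.
Qed.

End BregmanPositivity.

Lemma loss_nonneg_flat (Phi : R -> R) :
  Phi = sq_hinge \/ Phi = mod_huber ->
  (forall u, 0 <= Phi u) /\ (forall u, 1 <= u -> Phi u = 0).
Proof.
  intros [-> | ->]; split; unfold sq_hinge, mod_huber.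
  - intro u; apply Rle_0_sqr.
  - intros u Hu. rewrite Rmax_right by lra. unfold Rsqr; ring.
  - intro u. destruct (Rle_dec 1 u); [lra |].
    destruct (Rle_dec u (-1)); [lra | apply Rle_0_sqr].
  - intros u Hu. destruct (Rle_dec 1 u); [reflexivity | contradiction].
Qed.

Lemma cond_risk_one (Phi : R -> R) (v : R) : cond_risk Phi 1 v = Phi v.
Proof. unfold cond_risk; ring. Qed.

Lemma glb_cond_risk_one (Phi : R -> R) (v0 : R) :
  (forall u, 0 <= Phi u) -> Phi v0 = 0 ->
  is_glb (fun r => exists v', r = cond_risk Phi 1 v') 0.
Proof.
  intros Hnn Hv0. split.
  - intros r [v' ->]. rewrite cond_risk_one. apply Hnn.
  - intros lb Hlb. specialize (Hlb _ (ex_intro _ v0 eq_refl)).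
    rewrite cond_risk_one, Hv0 in Hlb. exact Hlb.
Qed.

(* General impossibility: a nonnegative loss vanishing at two distinct points
   has no Bregman representation of its excess conditional risk, because
   both zeros would be forced to have preimage 1 under t. *)
Lemma no_bregman_representation (Phi : R -> R) (v1 v2 : R) :
  (forall u, 0 <= Phi u) -> Phi v1 = 0 -> Phi v2 = 0 -> v1 <> v2 ->
  ~ exists (D : R -> Prop) (h h' t : R -> R),
      convex_set D /\
      (forall x, 0 <= x <= 1 -> D x) /\
      strictly_convex_on D h /\
      (forall x, D x -> deriv_within D h x (h' x)) /\
      (forall v, exists x, D x /\ t x = v) /\
      (forall v q x m, 0 <= q <= 1 -> D x -> t x = v ->
         is_glb (fun r => exists v', r = cond_risk Phi q v') m ->
         cond_risk Phi q v - m = bregman h h' q x).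
Proof.
  intros Hnn Hv1 Hv2 Hne [D [h [h' [t [Hconv [Hunit [Hstrict [Hder [Hsurj Hrep]]]]]]]]].
  assert (D1 : D 1) by (apply Hunit; lra).
  assert (Hglb := glb_cond_risk_one Phi v1 Hnn Hv1).
  assert (Hzero : forall v, Phi v = 0 -> t 1 = v).
  { intros v Hv. destruct (Hsurj v) as [x [Dx Htx]].
    assert (Hdiv := Hrep v 1 x 0 ltac:(lra) Dx Htx Hglb).
    rewrite cond_risk_one, Hv in Hdiv.
    destruct (Req_dec x 1) as [-> | Hx1]; [exact Htx |].
    assert (Hpos := bregman_pos D h Hconv Hstrict h' 1 x (Hder x Dx) D1 Dx
                      (not_eq_sym Hx1)).
    lra. }
  apply Hne. rewrite <- (Hzero v1 Hv1). exact (Hzero v2 Hv2).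
Qed.

Theorem propositionF1 (Phi : R -> R) :
  Phi = sq_hinge \/ Phi = mod_huber ->
  ~ exists (D : R -> Prop) (h h' t : R -> R),
      convex_set D /\
      (forall x, 0 <= x <= 1 -> D x) /\
      strictly_convex_on D h /\
      (forall x, D x -> deriv_within D h x (h' x)) /\
      (forall x, D x -> continuous_within D t x) /\
      (forall x y, D x -> D y -> t x = t y -> x = y) /\
      (forall v, exists x, D x /\ t x = v) /\
      (forall v q x m, 0 <= q <= 1 -> D x -> t x = v ->
         is_glb (fun r => exists v', r = cond_risk Phi q v') m ->
         cond_risk Phi q v - m = bregman h h' q x).
Proof.
  intros Hloss [D [h [h' [t [Hconv [Hunit [Hstrict [Hder [_ [_ [Hsurj Hrep]]]]]]]]]]].
  destruct (loss_nonneg_flat Phi Hloss) as [Hnn Hflat].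
  apply (no_bregman_representation Phi 1 2 Hnn
           (Hflat 1 ltac:(lra)) (Hflat 2 ltac:(lra)) ltac:(lra)).
  exists D, h, h', t. repeat split; assumption.
Qed.
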